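(* Let $\delta\ge2$ be an integer, $n=4\delta+2$, and $q$ a prime power with $n\mid(q-1)$. Let $b$ be a positive integer with $\gcd(b,n)=1$ and $t\in\{0,\dots,n-1\}$. Put $$A=\{\alpha^{t},\alpha^{t+b},\alpha^{t+(\delta+1)b},\alpha^{t+(2\delta+1)b}\},\qquad B=\{1,\alpha^{b},\dots,\alpha^{(\delta-2)b}\}.$$ Then $C_{AB}$ is an optimal cyclic $(\delta+2,\delta)$-LRC over $\mathbb{F}_q$ with parameters $[4\delta+2,\ \delta+4,\ 2\delta]$.
   Context: Let $q$ be a prime power and $n\mid(q-1)$, so the set $R_n$ of all $n$-th roots of unity lies in $\mathbb{F}_q$; let $\alpha\in\mathbb{F}_q$ be a primitive $n$-th root of unity. For $A,B\subseteq R_n$, $AB=\{\beta\gamma:\beta\in A,\gamma\in B\}$, and for $Z\subseteq R_n$, $C_Z$ denotes the cyclic code of length $n$ over $\mathbb{F}_q$ with complete defining set $Z$, i.e. the ideal generated by $\prod_{\beta\in Z}(x-\beta)$ in $\mathbb{F}_q[x]/(x^n-1)$, identified with a subspace of $\mathbb{F}_q^n$; it has dimension $n-|Z|$. Locality: for a linear code $C\subseteq\mathbb{F}_q^n$ and integers $r\ge1$, $\delta\ge2$, the $i$-th coordinate has $(r,\delta)$-locality if there is $S_i\subseteq\{1,\dots,n\}$ with $i\in S_i$, $|S_i|\le r+\delta-1$ such that the punctured code $C|_{S_i}$ has minimum distance at least $\delta$; $C$ is an $(r,\delta)$-LRC if every coordinate has $(r,\delta)$-locality. An $[n,k,d]$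 $(r,\delta)$-LRC is optimal if $d=n-k-(\lceil k/r\rceil-1)(\delta-1)+1$ (this quantity is always an upper bound on $d$). *)

From HB Require Import structures.
From mathcomp Require Import all_boot all_order all_algebra all_field.
Set Implicit Arguments. Unset Strict Implicit. Unset Printing Implicit Defensive.
Import GRing.Theory.
Local Open Scope ring_scope.

Section Codes.
Variable F : finFieldType.

Definition gen_poly (Z : {set F}) : {poly F} := \prod_(z in Z) ('X - z%:P).

(* the cyclic code C_Z of length n: the ideal generated by gen_poly Z in
   F[x]/(x^n - 1), a word c being identified with c_0 + c_1 x + ... + c_{n-1} x^{n-1} *)
Definition cyclic_code (n : nat) (Z : {set F}) (c : 'rV[F]_n) : Prop :=
  exists h : {poly F}, rVpoly c = (gen_poly Z * h) %% ('X^n - 1).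

Definition wt (n : nat) (c : 'rV[F]_n) : nat := #|[set i | c ord0 i != 0]|.

Definition code_dim (n : nat) (C : 'rV[F]_n -> Prop) (k : nat) : Prop :=
  exists V : {vspace 'rV[F]_n}, (forall c, C c <-> c \in V) /\ \dim V = k.

Definition min_dist (n : nat) (C : 'rV[F]_n -> Prop) (d : nat) : Prop :=
  (exists c, [/\ C c, c != 0 & wt c = d]) /\
  (forall c, C c -> c != 0 -> (d <= wt c)%N).

(* the i-th coordinate has (r, delta)-locality: the punctured code C|_S
   has minimum distance >= delta, i.e. every codeword nonzero on S has at
   least delta nonzero coordinates in S *)
Definition has_locality (n : nat) (C : 'rV[F]_n -> Prop) (r delta : nat) (i : 'I_n) : Prop :=
  exists S : {set 'I_n}, [/\ i \in S, (#|S| <= r + delta - 1)%N &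
    forall c, C c -> [exists j in S, c ord0 j != 0%R] ->
      (delta <= #|[set j in S | c ord0 j != 0%R]|)%N].

Definition is_LRC (n : nat) (C : 'rV[F]_n -> Prop) (r delta : nat) : Prop :=
  forall i : 'I_n, has_locality C r delta i.

End Codes.

(* Singleton-like bound attained: d = n - k - (ceil(k/r) - 1)(delta - 1) + 1 *)
Definition LRC_optimal_params (n k d r delta : nat) : Prop :=
  (d%:Z = n%:Z - k%:Z - ((((k + r - 1) %/ r)%N)%:Z - 1) * (delta%:Z - 1) + 1)%R.

From HB Require Import structures.
From mathcomp Require Import all_boot all_order all_algebra all_field zify.
Set Implicit Arguments. Unset Strict Implicit. Unset Printing Implicit Defensive.
Import GRing.Theory.
Local Open Scope ring_scope.

(* Proposition 4.9.  Put n = 4δ+2 = 2m with m = 2δ+1, beta = alpha^b (again a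
   primitive n-th root of unity, as b is coprime to n) and u = alpha^t.  Then
   AB = {u beta^j : j in J} with J = [0,δ) ∪ (δ,2δ) ∪ (2δ,3δ), so |AB| = 3δ-2 and
   C_AB has dimension δ+4.  Split a codeword c(x) by the parity of exponents,
   c = c_0 + c_1.  As beta^m = -1, c(u beta^j) = c_0 + c_1 and
   c(u beta^(j+m)) = c_0 - c_1 evaluated at u beta^j; for j < δ-1 both j and j+m
   lie in J, so both parity parts vanish there and, by the BCH bound, each parity
   class of m = (δ+2)+δ-1 coordinates carries a code of distance >= δ.  This is
   the locality, and it gives weight >= 2δ when both parts are nonzero.  If one
   part vanishes, the other vanishes on all of u beta^J, and the nodes
   beta^((δ+1)(2a+r)) then see 2δ-1 consecutive zeros: weight >= 2δ again.
   An explicit even-supported word of weight 2δ shows d = 2δ.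
   The file proves, in order: the BCH bound; the description of a cyclic code
   by its zeros and its dimension; the parity decomposition of polynomials and
   of coordinates; a few arithmetic facts; the construction itself; and finally
   the theorem, which just collects the four properties. *)

Lemma power_sums_horner (F : fieldType) (I : finType) (x w : I -> F) (k : nat)
    (q : {poly F}) :
  (forall l, (l < k)%N -> \sum_i w i * x i ^+ l = 0) -> (size q <= k)%N ->
  \sum_i w i * q.[x i] = 0.
Proof.
move=> moments0 size_q.
under eq_bigr => i _ do rewrite horner_coef mulr_sumr.
rewrite exchange_big big1 // => l _.
under eq_bigr => i _ do rewrite mulrCA.
by rewrite -mulr_sumr moments0 ?mulr0 // (leq_trans (ltn_ord l)).
Qed.

(* Evaluate the polynomial vanishing on all support nodes but one. *)
Lemma BCH_bound (F : fieldType) (I : finType) (x w : I -> F) (k : nat) (i0 : I) :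
  {in [set i | w i != 0%R] &, injective x} ->
  (forall l, (l < k)%N -> \sum_i w i * x i ^+ l = 0) ->
  w i0 != 0 -> (k < #|[set i | w i != 0%R]|)%N.
Proof.
set P := [set i | w i != 0%R] => x_inj moments0 wi0.
have i0P : i0 \in P by rewrite inE.
rewrite ltnNge; apply/negP => cardP_le.
pose q := \prod_(j in P :\ i0) ('X - (x j)%:P).
have size_q : (size q <= k)%N.
  by move: cardP_le; rewrite /q -big_enum size_prod_XsubC -cardE (cardsD1 i0 P) i0P.
have sum_q_i0 : \sum_i w i * q.[x i] = w i0 * q.[x i0].
  rewrite (bigD1 i0) //= big1 ?addr0 // => i ne_i_i0.
  have [iP|] := boolP (i \in P); last by rewrite inE negbK => /eqP ->; rewrite mul0r.
  have iP' : i \in P :\ i0 by rewrite in_setD1 ne_i_i0 iP.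
  by rewrite /q (bigD1 i iP') /= hornerM hornerXsubC subrr mul0r mulr0.
have q_i0 : q.[x i0] != 0.
  rewrite /q horner_prod prodf_seq_neq0; apply/allP => j _.
  apply/implyP; rewrite !inE => /andP [ne_j_i0 jP].
  rewrite hornerXsubC subr_eq0; apply: contra ne_j_i0 => /eqP xji0.
  by apply/eqP/x_inj; rewrite ?inE.
have := power_sums_horner moments0 size_q.
by rewrite sum_q_i0 => /eqP; rewrite mulf_eq0 (negbTE wi0) (negbTE q_i0).
Qed.

(* Multiplication by a fixed polynomial g, read on coefficient vectors: the
   linear parametrisation of a cyclic code by its message vectors. *)
Definition mul_poly_rV (R : comNzRingType) (k n : nat) (g : {poly R}) (v : 'rV[R]_k) : 'rV[R]_n :=
  poly_rV (g * rVpoly v).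

Lemma mul_poly_rV_semilinear (R : comNzRingType) (k n : nat) (g : {poly R}) :
  semilinear (@mul_poly_rV R k n g).
Proof.
split=> [a u|u v]; rewrite /mul_poly_rV; first by rewrite !linearZ /= -scalerAr linearZ.
by rewrite !linearD /= mulrDr linearD.
Qed.

HB.instance Definition _ (R : comNzRingType) (k n : nat) (g : {poly R}) :=
  GRing.isSemilinear.Build R 'rV_k 'rV_n _ (@mul_poly_rV R k n g)
    (mul_poly_rV_semilinear k n g).

Section CyclicCodes.
Variables (F : finFieldType) (n : nat) (Z : {set F}).
Hypothesis n_gt0 : (0 < n)%N.
Hypothesis Z_roots : {in Z, forall z, z ^+ n = 1}.

Local Notation g := (gen_poly Z).

Lemma size_gen_poly : size g = #|Z|.+1.
Proof. by rewrite /gen_poly -big_enum size_prod_XsubC cardE. Qed.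

Lemma gen_poly_neq0 : g != 0.
Proof. by rewrite -size_poly_eq0 size_gen_poly. Qed.

Lemma gen_poly_dvdp (p : {poly F}) : reflect {in Z, forall z, root p z} (g %| p).
Proof.
apply: (iffP idP) => [g_dvd z zZ | p_roots].
  apply: root_dvdp g_dvd _.
  by rewrite /gen_poly -big_enum root_prod_XsubC mem_enum.
rewrite /gen_poly -big_enum uniq_roots_dvdp ?uniq_rootsE ?enum_uniq //.
by apply/allP => z; rewrite mem_enum; apply: p_roots.
Qed.

Lemma gen_poly_dvd_Xn1 : g %| 'X^n - 1.
Proof. by apply/gen_poly_dvdp => z zZ; rewrite /root !hornerE Z_roots ?subrr. Qed.

Lemma size_Xn1 : size ('X^n - 1 : {poly F}) = n.+1.
Proof. by rewrite -polyC1 size_XnsubC. Qed.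

(* There are at most n n-th roots of unity, so |Z| <= n. *)
Lemma card_defset_le : (#|Z| <= n)%N.
Proof.
have := dvdp_leq _ gen_poly_dvd_Xn1.
by rewrite size_gen_poly size_Xn1 -size_poly_eq0 size_Xn1; apply.
Qed.

Lemma cyclic_codeE (c : 'rV[F]_n) : @cyclic_code F n Z c <-> g %| rVpoly c.
Proof.
split=> [[h ->] | g_dvd].
  by rewrite -(dvdp_mod _ gen_poly_dvd_Xn1) dvdp_mulr.
exists (rVpoly c %/ g); rewrite mulrC divpK // modp_small //.
by rewrite size_Xn1 ltnS size_poly.
Qed.

Lemma cyclic_code_roots (c : 'rV[F]_n) :
  @cyclic_code F n Z c <-> {in Z, forall z, (rVpoly c).[z] = 0}.
Proof.
rewrite cyclic_codeE; split => [/gen_poly_dvdp roots z /roots/eqP // | roots].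
by apply/gen_poly_dvdp => z /roots /eqP.
Qed.

(* dim C_Z = n - |Z|: the message map v |-> g * v is injective with image C_Z. *)
Lemma cyclic_code_dim : code_dim (@cyclic_code F n Z) (n - #|Z|).
Proof.
pose k := (n - #|Z|)%N.
have size_gv (v : 'rV[F]_k) : (size (g * rVpoly v)%R <= n)%N.
  apply: leq_trans (size_polyMleq _ _) _; rewrite size_gen_poly addSn /=.
  by rewrite -(subnKC card_defset_le) leq_add2l size_poly.
pose f := linfun (@mul_poly_rV F k n g).
exists (limg f); split => [c|].
  rewrite cyclic_codeE; split => [g_dvd | /memv_imgP [v _ ->]].
    have size_quo : (size (rVpoly c %/ g)%R <= k)%N.
      rewrite size_divp ?gen_poly_neq0 // size_gen_poly /= leq_subLR.
      by rewrite subnKC ?card_defset_le ?size_poly.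
    apply/memv_imgP; exists (poly_rV (rVpoly c %/ g)); first exact: memvf.
    rewrite lfunE /mul_poly_rV -[LHS]rVpolyK; congr poly_rV.
    rewrite -{1}(divpK g_dvd) mulrC; congr (g * _).
    exact: (esym (poly_rV_K size_quo)).
  by rewrite lfunE /mul_poly_rV poly_rV_K ?size_gv ?dvdp_mulr.
have /eqP f_inj : lker f == 0%VS.
  apply/lker0P => u v; rewrite !lfunE /mul_poly_rV => /(congr1 rVpoly).
  rewrite !poly_rV_K ?size_gv // => /(mulfI gen_poly_neq0) /(congr1 (@poly_rV F k)).
  by rewrite !rVpolyK.
by rewrite limg_dim_eq ?f_inj ?capv0 // dimvf dim_matrix mul1r.
Qed.

End CyclicCodes.

Lemma big_ord_double (V : nmodType) (m : nat) (f : nat -> V) :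
  \sum_(i < m.*2) f i = \sum_(a < m) f (a.*2 + false)%N + \sum_(a < m) f (a.*2 + true)%N.
Proof.
elim: m => [|m IH]; first by rewrite !big_ord0 addr0.
rewrite doubleS !big_ord_recr /= IH addn0 addn1.
by rewrite -!addrA; congr (_ + _); rewrite addrCA.
Qed.

Section ParityParts.
Variables (F : fieldType) (m : nat).

Definition half_eval (p : {poly F}) (r : bool) (z : F) : F :=
  \sum_(a < m) p`_(a.*2 + r) * z ^+ (a.*2 + r).

Definition half_support (p : {poly F}) (r : bool) : {set 'I_m} :=
  [set a : 'I_m | p`_(a.*2 + r) != 0].

Lemma horner_parity (p : {poly F}) (z : F) : (size p <= m.*2)%N ->
  p.[z] = half_eval p false z + half_eval p true z.
Proof.
by move=> size_p; rewrite (horner_coef_wide z size_p) (big_ord_double _ (fun i => p`_i * z ^+ i)).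
Qed.

Lemma half_eval_sign (p : {poly F}) (r : bool) (q : nat) (z : F) :
  half_eval p r ((-1) ^+ q * z) = (-1) ^+ (q * r) * half_eval p r z.
Proof.
rewrite mulr_sumr; apply: eq_bigr => a _.
rewrite exprMn -exprM mulrCA; congr (_ * _).
by rewrite -[LHS]signr_odd -[RHS]signr_odd !oddM oddD odd_double.
Qed.

Lemma half_eval_eq0 (p : {poly F}) (r : bool) (z : F) :
  half_support p r = set0 -> half_eval p r z = 0.
Proof.
move=> supp0; apply: big1 => a _; apply/eqP; rewrite mulf_eq0; apply/orP; left.
apply: contraT => p_a.
have : a \in half_support p r by rewrite inE.
by rewrite supp0 inE.
Qed.

Lemma parity_nodes_inj (g : F) (r : bool) :
  m.-primitive_root (g ^+ 2) -> injective (fun a : 'I_m => g ^+ (a.*2 + r)).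
Proof.
move=> g2_prim a a'; have m_gt0 : (0 < m)%N by apply: leq_ltn_trans (ltn_ord a).
have g_neq0 : g != 0.
  apply: contra_eq_neq (prim_expr_order g2_prim) => ->.
  by rewrite -exprM expr0n muln_eq0 /= eqn0Ngt m_gt0 eq_sym oner_neq0.
rewrite /= !exprD -!mul2n !exprM => /(mulIf (expf_neq0 _ g_neq0)) /eqP.
rewrite (eq_prim_root_expr g2_prim) !modn_small // => /eqP; exact: val_inj.
Qed.

(* BCH bound for one parity part: if it vanishes at z g^j for j < k (nodes
   g^(2a+r), weights p_(2a+r) z^(2a+r)), a nonzero part has more than k terms. *)
Lemma half_support_BCH (p : {poly F}) (r : bool) (z g : F) (k : nat) :
  z != 0 -> m.-primitive_root (g ^+ 2) ->
  (forall j, (j < k)%N -> half_eval p r (z * g ^+ j) = 0) ->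
  half_support p r != set0 -> (k < #|half_support p r|)%N.
Proof.
move=> z_neq0 g2_prim zeros /set0Pn [a0]; rewrite inE => p_a0.
pose w (a : 'I_m) := p`_(a.*2 + r) * z ^+ (a.*2 + r).
have -> : half_support p r = [set a | w a != 0%R].
  by apply/setP => a; rewrite !inE mulf_eq0 negb_or expf_neq0 ?andbT.
apply: (@BCH_bound F _ (fun a : 'I_m => g ^+ (a.*2 + r)) w k a0).
- by move=> a a' _ _; apply: parity_nodes_inj.
- move=> j /zeros zero_j; rewrite -[RHS]zero_j; apply: eq_bigr => a _.
  by rewrite -mulrA -exprM mulnC exprM -exprMn.
- by rewrite mulf_neq0 ?expf_neq0.
Qed.

End ParityParts.

Section ParityClasses.
Variables (F : finFieldType) (n m : nat).
Hypothesis n_double : n = m.*2.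

Definition parity_class (r : bool) : {set 'I_n} := [set i : 'I_n | odd i == r].

Fact parity_pos_subproof (r : bool) (a : 'I_m) : (a.*2 + r < n)%N.
Proof. by rewrite n_double; have := ltn_ord a; case: r; lia. Qed.

Definition parity_pos (r : bool) (a : 'I_m) : 'I_n := Ordinal (parity_pos_subproof r a).

Lemma parity_pos_inj (r : bool) : injective (parity_pos r).
Proof. by move=> a a' /(congr1 val) /= /addIn /double_inj /val_inj. Qed.

Lemma card_parity_restrict (P : pred 'I_n) (r : bool) :
  #|[set i in parity_class r | P i]| = #|[set a | P (parity_pos r a)]|.
Proof.
rewrite -(card_imset _ (@parity_pos_inj r)); apply: eq_card => i.
rewrite !inE; apply/andP/imsetP => [[/eqP odd_i Pi] | [a]].
  have i_half : (i./2 < m)%N by rewrite ltn_half_double -n_double.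
  have i_eq : parity_pos r (Ordinal i_half) = i.
    by apply: val_inj; rewrite /= -odd_i addnC odd_double_half.
  by exists (Ordinal i_half); rewrite ?inE i_eq.
by rewrite inE => Pa ->; rewrite /= oddD odd_double /=; case: r Pa.
Qed.

Lemma card_parity_class (r : bool) : #|parity_class r| = m.
Proof.
have -> : parity_class r = [set i in parity_class r | predT i].
  by apply/setP => i; rewrite !inE andbT.
by rewrite card_parity_restrict -[RHS]card_ord; apply: eq_card => a; rewrite inE.
Qed.

Lemma card_parity_support (c : 'rV[F]_n) (r : bool) :
  #|[set i in parity_class r | c ord0 i != 0]| = #|half_support m (rVpoly c) r|.
Proof.
by rewrite card_parity_restrict; apply: eq_card => a; rewrite !inE -(coef_rVpoly_ord c).
Qed.

Lemma wt_parity (c : 'rV[F]_n) :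
  wt c = (#|half_support m (rVpoly c) false| + #|half_support m (rVpoly c) true|)%N.
Proof.
rewrite -!card_parity_support /wt.
rewrite -(cardsID (parity_class true) [set i | c ord0 i != 0]) addnC.
by congr (_ + _)%N; apply: eq_card => i; rewrite !inE; case: (odd i); rewrite ?andbT ?andbF.
Qed.

End ParityClasses.

Lemma wt_eq0 (F : finFieldType) (n : nat) (c : 'rV[F]_n) : (wt c == 0%N) = (c == 0).
Proof.
rewrite cards_eq0; apply/eqP/eqP => [supp0 | ->]; last by apply/setP => i; rewrite !inE mxE eqxx.
apply/rowP => i; rewrite mxE; apply/eqP; apply: contraT => ci.
have : i \in [set i | c ord0 i != 0] by rewrite inE.
by rewrite supp0 inE.
Qed.

Lemma card_ord_count (N : nat) (P : pred nat) :
  #|[set j : 'I_N | P j]| = count P (iota 0 N).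
Proof. by rewrite -val_enum_ord count_map cardsE cardE size_filter enumT. Qed.

Lemma count_iota_const (P : pred nat) (a l : nat) :
  (forall j, (a <= j < a + l)%N -> P j = P a) -> count P (iota a l) = (P a * l)%N.
Proof.
move=> P_const; rewrite (eq_in_count (a2 := fun=> P a)).
  by case: (P a) {P_const}; rewrite ?count_predT ?count_pred0 ?size_iota ?mul1n.
by move=> j; rewrite mem_iota => /P_const.
Qed.

Lemma not_dvdn_lt_double (m x : nat) : (0 < x < 2 * m)%N -> x != m -> ~~ (m %| x)%N.
Proof. by move=> x_bounds x_neq_m; apply/dvdnP => [[[|[|k]] x_eq]]; lia. Qed.

Lemma prim_root_sum_eq0 (F : fieldType) (m e : nat) (z : F) :
  m.-primitive_root z -> ~~ (m %| e)%N -> \sum_(a < m) (z ^+ e) ^+ a = 0.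
Proof.
move=> z_prim not_dvd.
have ze_m : (z ^+ e) ^+ m = 1.
  by rewrite -exprM mulnC exprM (prim_expr_order z_prim) expr1n.
have ze_neq1 : z ^+ e - 1 != 0 by rewrite subr_eq0 -(prim_order_dvd z_prim).
have := subrX1 (z ^+ e) m; rewrite ze_m subrr => /esym /eqP.
by rewrite mulf_eq0 (negbTE ze_neq1) => /eqP.
Qed.

Lemma sum_diff_eq0 (F : fieldType) (x y : F) :
  (2 : F) != 0 -> x + y = 0 -> x - y = 0 -> x = 0 /\ y = 0.
Proof.
move=> two_neq0 sum0 /eqP; rewrite subr_eq0 => /eqP x_y.
move: sum0; rewrite -x_y -mulr2n -mulr_natl => /eqP.
by rewrite mulf_eq0 (negbTE two_neq0) => /eqP.
Qed.

Section Construction.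
Variables (F : finFieldType) (delta : nat) (alpha : F) (b t : nat).
Local Notation n := (4 * delta + 2)%N.
Local Notation m := (2 * delta + 1)%N.
Hypothesis delta_ge2 : (2 <= delta)%N.
Hypothesis alpha_prim : n.-primitive_root alpha.
Hypothesis b_coprime : coprime b n.

Let beta := alpha ^+ b.
Let u := alpha ^+ t.

Let A : {set F} := [set alpha ^+ t; alpha ^+ (t + b);
                     alpha ^+ (t + (delta + 1) * b); alpha ^+ (t + (2 * delta + 1) * b)].
Let B : {set F} := [set alpha ^+ (i * b) | i : 'I_(delta - 1)].
Let AB : {set F} := [set x * y | x in A, y in B].
Let C := @cyclic_code F n AB.

Lemma n_double : n = m.*2. Proof. lia. Qed.

Lemma beta_prim : n.-primitive_root beta.
Proof. by rewrite prim_root_exp_coprime. Qed.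

Lemma beta2_prim : m.-primitive_root (beta ^+ 2).
Proof.
have m_dvd_n : (m %| n)%N by apply/dvdnP; exists 2%N; lia.
have n_div_m : (n %/ m = 2)%N by rewrite (_ : n = 2 * m)%N ?mulnK //; lia.
by have := dvdn_prim_root beta_prim m_dvd_n; rewrite n_div_m.
Qed.

Lemma beta_half_neq1 : beta ^+ m != 1.
Proof. by rewrite -(prim_order_dvd beta_prim); apply/negP => /dvdn_leq; lia. Qed.

Lemma beta_half : beta ^+ m = -1.
Proof.
have : (beta ^+ m) ^+ 2 == 1.
  by rewrite -exprM (_ : m * 2 = n)%N ?(prim_expr_order beta_prim) //; lia.
by rewrite sqrf_eq1 (negbTE beta_half_neq1) => /eqP.
Qed.

Lemma two_neq0 : (2 : F) != 0.
Proof.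
apply: contra beta_half_neq1 => /eqP two0.
by rewrite beta_half eq_sym -addr_eq0 -mulr2n two0.
Qed.

Lemma u_neq0 : u != 0.
Proof.
apply: expf_neq0; apply: contra_eq_neq (prim_expr_order alpha_prim) => ->.
by rewrite expr0n addn2 eq_sym oner_neq0.
Qed.

(* The exponent set J: AB = {u beta^j : j in J}. *)
Definition def_exp (j : nat) : bool :=
  [|| (j < delta)%N, (delta < j < 2 * delta)%N | (2 * delta < j < 3 * delta)%N].

Lemma exp_shift (e i : nat) :
  alpha ^+ (t + e * b) * alpha ^+ (i * b) = u * beta ^+ (e + i).
Proof. by rewrite /u /beta -exprM -!exprD mulnDr addnA (mulnC b e) (mulnC b i). Qed.

(* J is covered by the four shifted copies e + [0, δ-1), e in {0, 1, δ+1, 2δ+1}. *)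
Lemma AB_mem (e i : nat) : alpha ^+ (t + e * b) \in A -> (i < delta - 1)%N ->
  u * beta ^+ (e + i) \in AB.
Proof.
move=> eA i_lt; rewrite -exp_shift; apply/imset2P.
exists (alpha ^+ (t + e * b)) (alpha ^+ (i * b)) => //.
by apply/imsetP; exists (Ordinal i_lt).
Qed.

Lemma def_exp_mem (j : nat) : def_exp j -> u * beta ^+ j \in AB.
Proof.
case/or3P => [j_lt | /andP [j_gt j_lt] | /andP [j_gt j_lt]].
- have [j_lt' | j_ge] := ltnP j (delta - 1).
    by rewrite -(add0n j); apply: AB_mem; rewrite // mul0n addn0 !inE eqxx.
  rewrite (_ : j = 1 + (delta - 2))%N; last lia.
  by apply: AB_mem; [rewrite mul1n !inE eqxx orbT | lia].
- rewrite (_ : j = (delta + 1) + (j - delta - 1))%N; last lia.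
  by apply: AB_mem; [rewrite !inE eqxx !orbT | lia].
- rewrite (_ : j = (2 * delta + 1) + (j - 2 * delta - 1))%N; last lia.
  by apply: AB_mem; [rewrite !inE eqxx !orbT | lia].
Qed.

Lemma mem_AB (z : F) : z \in AB -> exists2 j, def_exp j & z = u * beta ^+ j.
Proof.
case/imset2P => x y xA /imsetP [i _ ->] ->; have i_lt := ltn_ord i.
move: xA; rewrite !inE => /orP [/orP [/orP [] | ] | ] /eqP ->.
- exists i; first by rewrite /def_exp; lia.
  by rewrite /u /beta -exprM mulnC.
- by exists (1 + i)%N; [rewrite /def_exp; lia | rewrite -exp_shift mul1n].
- by exists (delta + 1 + i)%N; [rewrite /def_exp; lia | rewrite -exp_shift].
- by exists (2 * delta + 1 + i)%N; [rewrite /def_exp; lia | rewrite -exp_shift].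
Qed.

Lemma AB_roots : {in AB, forall z, z ^+ n = 1}.
Proof.
have alpha_n k : alpha ^+ (k * n) = 1.
  by rewrite mulnC exprM (prim_expr_order alpha_prim) expr1n.
by move=> _ /mem_AB [j _ ->]; rewrite exprMn /u /beta -!exprM !alpha_n mulr1.
Qed.

(* |J| = δ + (δ-1) + (δ-1). *)
Lemma card_def_exp : #|[set j : 'I_n | def_exp j]| = (3 * delta - 2)%N.
Proof.
have -> : n = (delta + (1 + (delta - 1 + (1 + (delta - 1 + (delta + 2))))))%N by lia.
rewrite card_ord_count.
do 5 rewrite iotaD count_cat.
rewrite !count_iota_const /def_exp; first lia.
all: by move=> j; rewrite /def_exp; lia.
Qed.

(* The u beta^j, j < n, are distinct, so |AB| = |J| = 3δ - 2. *)
Lemma card_AB : #|AB| = (3 * delta - 2)%N.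
Proof.
have -> : AB = [set u * beta ^+ (val j) | j in [set j : 'I_n | def_exp j]].
  apply/setP => z; apply/idP/imsetP => [/mem_AB [j def_j ->] | [j]].
    have j_lt : (j < n)%N by move: def_j; rewrite /def_exp; lia.
    by exists (Ordinal j_lt); rewrite ?inE.
  by rewrite inE => /def_exp_mem z_AB ->.
rewrite card_in_imset ?card_def_exp // => i j _ _ /(mulfI u_neq0) /eqP.
by rewrite (eq_prim_root_expr beta_prim) !modn_small ?ltn_ord // => /eqP /val_inj.
Qed.

Lemma code_zeros (c : 'rV[F]_n) :
  C c <-> forall j, def_exp j -> (rVpoly c).[u * beta ^+ j] = 0.
Proof.
rewrite /C (cyclic_code_roots _ AB_roots) ?addn2 //.
split=> [zeros j /def_exp_mem /zeros // | zeros z /mem_AB [j /zeros ? ->] //].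
Qed.

Lemma size_rVpoly_parity (c : 'rV[F]_n) : (size (rVpoly c) <= m.*2)%N.
Proof. by rewrite -n_double size_poly. Qed.

(* Since u beta^(j+m) = -(u beta^j), the odd part changes sign there. *)
Lemma eval_shift_half (c : 'rV[F]_n) (j : nat) :
  (rVpoly c).[u * beta ^+ (j + m)] =
  half_eval m (rVpoly c) false (u * beta ^+ j) - half_eval m (rVpoly c) true (u * beta ^+ j).
Proof.
have -> : u * beta ^+ (j + m) = (-1) ^+ 1 * (u * beta ^+ j).
  by rewrite exprD beta_half expr1 mulN1r mulrN1 mulrN.
by rewrite (horner_parity _ (size_rVpoly_parity c)) !half_eval_sign expr0 mul1r expr1 mulN1r.
Qed.

(* Both parity parts of a codeword vanish at u beta^j for j < δ - 1,
   because j and j + m both lie in J. *)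
Lemma local_zeros (c : 'rV[F]_n) (r : bool) (j : nat) : C c -> (j < delta - 1)%N ->
  half_eval m (rVpoly c) r (u * beta ^+ j) = 0.
Proof.
move=> /code_zeros zeros j_lt.
have def_j : def_exp j by rewrite /def_exp; lia.
have def_jm : def_exp (j + m) by rewrite /def_exp; lia.
have [even0 odd0] := sum_diff_eq0 two_neq0
  (etrans (esym (horner_parity _ (size_rVpoly_parity c))) (zeros j def_j))
  (etrans (esym (eval_shift_half c j)) (zeros (j + m)%N def_jm)).
by case: r.
Qed.

(* If one parity part of a codeword is zero, the other one vanishes at
   u (beta^(δ+1))^l for l < 2δ - 1: writing (δ+1) l = q m + j with j in J,
   beta^((δ+1) l) = (-1)^q beta^j. *)
Lemma global_zeros (c : 'rV[F]_n) (r : bool) (l : nat) : C c ->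
  half_support m (rVpoly c) (~~ r) = set0 -> (l < 2 * delta - 1)%N ->
  half_eval m (rVpoly c) r (u * (beta ^+ (delta + 1)) ^+ l) = 0.
Proof.
move=> /code_zeros zeros other0 l_lt.
have part_zeros j : def_exp j -> half_eval m (rVpoly c) r (u * beta ^+ j) = 0.
  move=> /zeros; rewrite (horner_parity _ (size_rVpoly_parity c)).
  by case: r other0 => /half_eval_eq0 ->; rewrite ?addr0 ?add0r.
have [q [j [l_eq def_j]]] : exists q j, ((delta + 1) * l = q * m + j)%N /\ def_exp j.
  have := odd_double_half l; case: (odd l) => /= l_eq.
    by exists l./2, (l./2 + (delta + 1))%N; split; [lia | rewrite /def_exp; lia].
  by exists l./2, l./2; split; [lia | rewrite /def_exp; lia].
rewrite -exprM l_eq exprD (mulnC q) exprM beta_half mulrCA half_eval_sign.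
by rewrite part_zeros // mulr0.
Qed.

(* beta^(2(δ+1)) is a primitive m-th root, as δ+1 is coprime to m = 2δ+1. *)
Lemma beta_step_prim : m.-primitive_root ((beta ^+ (delta + 1)) ^+ 2).
Proof.
rewrite -exprM (mulnC (delta + 1)%N) exprM (prim_root_exp_coprime _ beta2_prim).
have -> : (2 * delta + 1 = (delta + 1) + delta)%N by lia.
by rewrite /coprime gcdnDl addn1; exact: coprimeSn.
Qed.

Lemma local_bound (c : 'rV[F]_n) (r : bool) : C c ->
  half_support m (rVpoly c) r != set0 -> (delta <= #|half_support m (rVpoly c) r|)%N.
Proof.
move=> cC supp_r; suff : (delta - 1 < #|half_support m (rVpoly c) r|)%N by lia.
by apply: (half_support_BCH u_neq0 beta2_prim) supp_r => j; apply: local_zeros.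
Qed.

Lemma global_bound (c : 'rV[F]_n) (r : bool) : C c ->
  half_support m (rVpoly c) (~~ r) = set0 -> half_support m (rVpoly c) r != set0 ->
  (2 * delta <= #|half_support m (rVpoly c) r|)%N.
Proof.
move=> cC other0 supp_r; suff : (2 * delta - 1 < #|half_support m (rVpoly c) r|)%N by lia.
by apply: (half_support_BCH u_neq0 beta_step_prim) supp_r => l; apply: global_zeros.
Qed.

Lemma min_weight_bound (c : 'rV[F]_n) : C c -> c != 0 -> (2 * delta <= wt c)%N.
Proof.
move=> cC; rewrite -wt_eq0 (wt_parity n_double).
have [supp_f|supp_f] := eqVneq (half_support m (rVpoly c) false) set0;
  have [supp_t|supp_t] := eqVneq (half_support m (rVpoly c) true) set0.
- by rewrite supp_f supp_t cards0.
- by rewrite supp_f cards0 => _; apply: (global_bound (r := true)).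
- by rewrite supp_t cards0 addn0 => _; apply: (global_bound (r := false)).
- by have := local_bound cC supp_f; have := local_bound cC supp_t; lia.
Qed.

(* The parity class of i (m = (δ+2) + δ - 1 coordinates) is a repair set. *)
Lemma locality_C : is_LRC C (delta + 2) delta.
Proof.
move=> i; exists (parity_class n (odd i)); split.
- by rewrite inE.
- by rewrite (card_parity_class n_double); lia.
move=> c cC /existsP [j /andP [j_class cj]].
rewrite (card_parity_support n_double); apply: local_bound cC _.
rewrite -card_gt0 -(card_parity_support n_double).
by apply/card_gt0P; exists j; rewrite inE j_class.
Qed.

Definition min_word_poly : {poly F} :=
  \poly_(i < n) (if odd i then 0
                 else ((beta ^+ 2) ^+ (i./2 * (delta + 1)) - (beta ^+ 2) ^+ i./2) / u ^+ i).

Definition min_word : 'rV[F]_n := poly_rV min_word_poly.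

Lemma rVpoly_min_word : rVpoly min_word = min_word_poly.
Proof. by rewrite poly_rV_K // size_poly. Qed.

Lemma min_word_coef (a : 'I_m) (r : bool) : min_word_poly`_(a.*2 + r) =
  if r then 0 else ((beta ^+ 2) ^+ (a * (delta + 1)) - (beta ^+ 2) ^+ a) / u ^+ a.*2.
Proof.
rewrite coef_poly (parity_pos_subproof n_double r a).
by case: r; rewrite /= ?addn0 ?addn1 /= odd_double ?doubleK.
Qed.

Lemma min_word_support_odd : half_support m min_word_poly true = set0.
Proof. by apply/setP => a; rewrite !inE min_word_coef eqxx. Qed.

(* ... and its even coefficients vanish exactly for a = 0, as m is coprime to δ. *)
Lemma card_min_word_support_even : #|half_support m min_word_poly false| = (2 * delta)%N.
Proof.
have m_gt0 : (0 < m)%N by rewrite addn1.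
have -> : half_support m min_word_poly false = [set~ Ordinal m_gt0].
  apply/setP => a; rewrite !inE min_word_coef /= mulf_eq0 invr_eq0 expf_eq0 (negbTE u_neq0).
  rewrite andbF orbF subr_eq0 (eq_prim_root_expr beta2_prim) eqn_mod_dvd ?leq_pmulr ?addn1 //.
  rewrite mulnDr muln1 addnK Gauss_dvdl; last by rewrite /coprime gcdnC gcdnMDl gcdn1.
  congr (~~ _); apply/idP/eqP => [m_dvd_a | -> //]; apply: val_inj => /=.
  by move: m_dvd_a; rewrite /dvdn modn_small // => /eqP.
by rewrite cardsC1 card_ord addn1.
Qed.

(* At u beta^j it evaluates to a difference of two geometric sums of
   nontrivial m-th roots of unity, hence it is a codeword. *)
Lemma min_word_in_code : C min_word.
Proof.
apply/code_zeros => j def_j.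
rewrite (horner_parity _ (size_rVpoly_parity min_word)) rVpoly_min_word.
rewrite (half_eval_eq0 _ min_word_support_odd) addr0.
transitivity (\sum_(a < m) (((beta ^+ 2) ^+ (delta + 1 + j)) ^+ a - ((beta ^+ 2) ^+ (1 + j)) ^+ a)).
  apply: eq_bigr => a _; rewrite min_word_coef addn0 (exprMn _ u) mulrA.
  rewrite (divfK (expf_neq0 _ u_neq0)).
  rewrite mulrBl -!exprM -!exprD; congr (_ ^+ _ - _ ^+ _); nia.
rewrite sumrB !(prim_root_sum_eq0 beta2_prim) ?subrr //;
  apply: not_dvdn_lt_double; move: def_j; rewrite /def_exp; lia.
Qed.

Lemma wt_min_word : wt min_word = (2 * delta)%N.
Proof.
rewrite (wt_parity n_double) rVpoly_min_word min_word_support_odd cards0.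
by rewrite card_min_word_support_even addn0.
Qed.

Lemma code_dim_C : code_dim C (delta + 4).
Proof.
have n_gt0 : (0 < n)%N by rewrite addn2.
have -> : (delta + 4 = n - #|AB|)%N by rewrite card_AB; lia.
exact: cyclic_code_dim n_gt0 AB_roots.
Qed.

Lemma min_dist_C : min_dist C (2 * delta).
Proof.
split=> [|c cC c_neq0]; last exact: min_weight_bound.
exists min_word; split; [exact: min_word_in_code | | exact: wt_min_word].
by rewrite -wt_eq0 wt_min_word; lia.
Qed.

End Construction.

(* With k = δ+4 and r = δ+2 one has ceil(k/r) = 2, so the bound is 2δ. *)
Lemma optimal_params (delta : nat) :
  LRC_optimal_params (4 * delta + 2) (delta + 4) (2 * delta) (delta + 2) delta.
Proof.
rewrite /LRC_optimal_params (_ : (delta + 4 + (delta + 2) - 1 = 2 * (delta + 2) + 1)%N); last lia.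
by rewrite divnMDl ?divn_small //; lia.
Qed.

Theorem proposition4p9 (F : finFieldType) (delta : nat) (alpha : F) (b t : nat) :
  (2 <= delta)%N ->
  (4 * delta + 2 %| #|F| - 1)%N ->
  (4 * delta + 2)%N.-primitive_root alpha ->
  (0 < b)%N -> coprime b (4 * delta + 2) ->
  (t < 4 * delta + 2)%N ->
  let A : {set F} := [set alpha ^+ t; alpha ^+ (t + b);
                      alpha ^+ (t + (delta + 1) * b); alpha ^+ (t + (2 * delta + 1) * b)] in
  let B : {set F} := [set alpha ^+ (i * b) | i : 'I_(delta - 1)] in
  let AB : {set F} := [set x * y | x in A, y in B] in
  let C := @cyclic_code F (4 * delta + 2) AB in
  [/\ code_dim C (delta + 4), min_dist C (2 * delta),
      is_LRC C (delta + 2) delta &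
      LRC_optimal_params (4 * delta + 2) (delta + 4) (2 * delta) (delta + 2) delta].
Proof.
move=> delta_ge2 _ alpha_prim _ b_coprime _ A B AB C; split.
- exact: code_dim_C.
- exact: min_dist_C.
- exact: locality_C.
- exact: optimal_params.
Qed.
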